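(* There are universal constants $c,C>0$ with the following property. Let $(\Omega,Q,\pi)$ be a reversible Markov chain on a finite set $\Omega$ and $K>0$. Suppose ${\rm Ent}_\pi(f)\le K\,\mathcal E_\pi(f,\log f)$ for every positive function $f$ on $\Omega$ with $f(\omega)\ge c$ for all $\omega\in\Omega$ and $\mathbb E_\pi f=1$. Then $(\Omega,Q,\pi)$ satisfies the MLSI with constant $CK$, i.e. ${\rm Ent}_\pi(f)\le CK\,\mathcal E_\pi(f,\log f)$ for all $f:\Omega\to(0,\infty)$.
   Context: ${\rm Ent}_\pi(f):=\mathbb E_\pi[f(\log f-\log\mathbb E_\pi f)]$ and $\mathcal E_\pi(f,\log f):=\frac12\sum_{\omega,\omega'\in\Omega}\pi(\omega)Q(\omega,\omega')(f(\omega)-f(\omega'))\log\frac{f(\omega)}{f(\omega')}$. *)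

From mathcomp Require Import all_boot all_order all_algebra.
From mathcomp Require Import all_classical all_reals.
From mathcomp Require Import exp.
Set Implicit Arguments. Unset Strict Implicit. Unset Printing Implicit Defensive.
Import Order.TTheory GRing.Theory Num.Theory.
Local Open Scope ring_scope.

(* A finite reversible Markov chain (Omega, Q, pi): pi is a strictly positive
   probability on Omega, Q(w,w') >= 0 for w <> w' are the transition rates
   (the diagonal of Q plays no role in the Dirichlet form), and detailed
   balance pi(w) Q(w,w') = pi(w') Q(w',w) holds. *)
Definition reversible_chain (R : realType) (Omega : finType)
  (Q : Omega -> Omega -> R) (pi : Omega -> R) : Prop :=
  (forall w, 0 < pi w) /\ (\sum_(w : Omega) pi w = 1) /\
  (forall w w', w != w' -> 0 <= Q w w') /\
  (forall w w', pi w * Q w w' = pi w' * Q w' w).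

Definition Epi (R : realType) (Omega : finType) (pi : Omega -> R)
  (f : Omega -> R) : R := \sum_(w : Omega) pi w * f w.

Definition Ent (R : realType) (Omega : finType) (pi : Omega -> R)
  (f : Omega -> R) : R :=
  Epi pi (fun w => f w * (ln (f w) - ln (Epi pi f))).

Definition Dir (R : realType) (Omega : finType) (Q : Omega -> Omega -> R)
  (pi : Omega -> R) (f : Omega -> R) : R :=
  2^-1 * \sum_(w : Omega) \sum_(w' : Omega)
     pi w * Q w w' * (f w - f w') * ln (f w / f w').

From mathcomp Require Import all_boot all_order all_algebra.
From mathcomp Require Import all_classical all_reals.
From mathcomp Require Import exp.
From mathcomp Require Import ring lra.
Set Implicit Arguments. Unset Strict Implicit. Unset Printing Implicit Defensive.
Import Order.TTheory GRing.Theory Num.Theory.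
Local Open Scope ring_scope.

(* Given f > 0 with mean m, the function g := 1/2 + f/(2m) has mean 1 and is
   bounded below by 1/2, so the hypothesis applies to g.  Writing
   psi z := z ln z - z + 1, one has Ent f = m E[psi (f/m)] and Ent g = E[psi g];
   the pointwise inequality psi (2y - 1) <= 12 psi y for y > 1/2 then gives
   Ent f <= 12 m Ent g.  On the other side, an affine change a + b f with
   a >= 0 moves every ratio f(w)/f(w') towards 1, so Dir g <= Dir f / (2m).
   Altogether Ent f <= 12 m K Dir f / (2m) = 6 K Dir f. *)

Definition psi (R : realType) (z : R) : R := z * ln z - z + 1.

Lemma ln_ge1BV (R : realType) (t : R) : 0 < t -> 1 - t^-1 <= ln t.
Proof.
move=> t_gt0; have := @le_ln1Dx R (t^-1 - 1).
rewrite ltrBrDr addrC subrr invr_gt0 addrC subrK lnV ?posrE // => /(_ t_gt0).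
lra.
Qed.

Lemma ln_ge_rational (R : realType) (y : R) : 1/2 <= y ->
  10 * (y - 1) <= (8 * y + 2) * ln y.
Proof.
move=> y_ge; have y_gt0 : 0 < y by lra.
set t := Num.sqrt y; have t_gt0 : 0 < t by rewrite sqrtr_gt0.
have yE : y = t ^+ 2 by rewrite sqr_sqrtr // ltW.
have lnyE : ln y = 2 * ln t by rewrite yE lnXn // mulr_natl.
have t_ge : 2/3 <= t.
  have : 1/2 <= t ^+ 2 by rewrite -yE.
  nra.
have ln_t := ln_ge1BV t_gt0; set u := t^-1 in ln_t.
have u_gt0 : 0 < u by rewrite invr_gt0.
(* Substituting ln t >= 1 - 1/t leaves the nonnegative remainder below. *)
have remE : (8 * y + 2) * (2 * (1 - u)) - 10 * (y - 1)
    = 2 * (t - 1) ^+ 2 * (3 * t - 2) * u.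
  by rewrite yE /u; field; rewrite gt_eqF.
have rem_ge0 : 0 <= 2 * (t - 1) ^+ 2 * (3 * t - 2) * u.
  apply: mulr_ge0 (ltW u_gt0); apply: mulr_ge0; last lra.
  by rewrite mulr_ge0 ?sqr_ge0.
have : (8 * y + 2) * (2 * (1 - u)) <= (8 * y + 2) * (2 * ln t).
  by apply: ler_wpM2l; lra.
rewrite lnyE; lra.
Qed.

Lemma psi_le_mid (R : realType) (y : R) : 1/2 < y ->
  psi (2 * y - 1) <= 12 * psi y.
Proof.
move=> y_gt; set x := 2 * y - 1; have x_gt0 : 0 < x by rewrite /x; lra.
have y_gt0 : 0 < y by lra.
have xlnx : x * ln x <= 2 * x * ln y.
  have : ln x <= ln (y ^+ 2).
    rewrite ler_ln ?posrE ?exprn_gt0 //.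
    by rewrite /x; have := sqr_ge0 (y - 1); rewrite expr2; nra.
  by rewrite lnXn // mulr2n => /(ler_wpM2l (ltW x_gt0)); nra.
have := ln_ge_rational (ltW y_gt).
by rewrite /psi /x in xlnx *; lra.
Qed.

Lemma affine_entropy_flux_le (R : realType) (a b x y : R) :
  0 <= a -> 0 < b -> 0 < x -> 0 < y ->
  ((a + b * x) - (a + b * y)) * ln ((a + b * x) / (a + b * y))
    <= b * ((x - y) * ln (x / y)).
Proof.
move=> a_ge0 b_gt0 x_gt0 y_gt0.
have ax_gt0 : 0 < a + b * x by nra.
have ay_gt0 : 0 < a + b * y by nra.
have ln_le : (y <= x -> ln ((a + b * x) / (a + b * y)) <= ln (x / y)) /\
             (x <= y -> ln (x / y) <= ln ((a + b * x) / (a + b * y))).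
  rewrite !ler_ln ?posrE ?divr_gt0 //.
  rewrite ler_pdivrMr // mulrAC ler_pdivlMr //.
  rewrite ler_pdivrMr // mulrAC ler_pdivlMr //.
  by split; nra.
have -> : (a + b * x) - (a + b * y) = b * (x - y) by ring.
rewrite -mulrA; apply: ler_wpM2l; first exact: ltW.
have [yx | xy] := lerP y x.
  by apply: ler_wpM2l; [lra | apply: ln_le.1].
by rewrite ler_nM2l; [apply: ln_le.2; lra | lra].
Qed.

Section FiniteChain.
Variables (R : realType) (Omega : finType) (pi : Omega -> R).
Hypotheses (pi_gt0 : forall w, 0 < pi w) (pi_sum1 : \sum_w pi w = 1).

Lemma Epi_gt0 (f : Omega -> R) : (forall w, 0 < f w) -> 0 < Epi pi f.
Proof.
move=> f_gt0; have [w _] : exists w : Omega, true.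
  case: (pickP (@predT Omega)) => [w _|none]; first by exists w.
  by move: pi_sum1; rewrite big_pred0 // => /eqP; rewrite eq_sym oner_eq0.
rewrite /Epi (bigD1 w) //=; apply: ltr_pwDl; first exact: mulr_gt0.
by apply: sumr_ge0 => v _; rewrite mulr_ge0 // ltW.
Qed.

Lemma Epi_affine (a b : R) (f : Omega -> R) :
  Epi pi (fun w => a + b * f w) = a + b * Epi pi f.
Proof.
rewrite /Epi (eq_bigr (fun w => pi w * a + b * (pi w * f w))); last first.
  by move=> w _; ring.
by rewrite big_split /= -mulr_suml -mulr_sumr pi_sum1 mul1r.
Qed.

Lemma Ent_psi (f : Omega -> R) : (forall w, 0 < f w) ->
  Ent pi f = Epi pi f * Epi pi (fun w => psi (f w / Epi pi f)).
Proof.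
move=> f_gt0; set m := Epi pi f; have m_gt0 : 0 < m := Epi_gt0 f_gt0.
have mean1 : Epi pi (fun w => 0 + m^-1 * f w) = 1.
  by rewrite Epi_affine add0r mulVf ?gt_eqF.
rewrite /Epi (eq_bigr (fun w => pi w * (f w / m * ln (f w / m))
    - pi w * (0 + m^-1 * f w) + pi w)); last by move=> w _; rewrite /psi; ring.
rewrite big_split sumrB /= -[\sum_i _ * (0 + _)]/(Epi _ _) mean1 pi_sum1 subrK.
rewrite mulr_sumr; apply: eq_bigr => w _.
rewrite ln_div ?posrE //.
have fE : f w = m * (f w / m) by field; rewrite gt_eqF.
by rewrite {1}fE; ring.
Qed.

Variable Q : Omega -> Omega -> R.
Hypothesis Q_ge0 : forall w w', w != w' -> 0 <= Q w w'.

Lemma Dir_affine_le (a b : R) (f : Omega -> R) :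
  0 <= a -> 0 < b -> (forall w, 0 < f w) ->
  Dir Q pi (fun w => a + b * f w) <= b * Dir Q pi f.
Proof.
move=> a_ge0 b_gt0 f_gt0; rewrite /Dir mulrCA; apply: ler_wpM2l; first lra.
rewrite mulr_sumr; apply: ler_sum => w _.
rewrite mulr_sumr; apply: ler_sum => w' _.
have [<-|neq] := eqVneq w w'; first by rewrite !subrr !(mulr0, mul0r).
have piQ_ge0 : 0 <= pi w * Q w w' by rewrite mulr_ge0 ?(ltW (pi_gt0 w)) ?Q_ge0.
set P := pi w * Q w w' in piQ_ge0 *.
rewrite -!(mulrA P) [b * (P * _)]mulrCA; apply: ler_wpM2l => //.
exact: affine_entropy_flux_le.
Qed.

End FiniteChain.

Theorem mainTheorem7 (R : realType) :
  exists c C : R, 0 < c /\ 0 < C /\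
  forall (Omega : finType) (Q : Omega -> Omega -> R) (pi : Omega -> R) (K : R),
    reversible_chain Q pi -> 0 < K ->
    (forall f : Omega -> R, (forall w, 0 < f w) -> (forall w, c <= f w) ->
        Epi pi f = 1 -> Ent pi f <= K * Dir Q pi f) ->
    forall f : Omega -> R, (forall w, 0 < f w) ->
      Ent pi f <= C * K * Dir Q pi f.
Proof.
exists (1/2), 6; split; first lra; split; first lra.
move=> Omega Q pi K [pi_gt0 [pi_sum1 [Q_ge0 _]]] K_gt0 mlsi f f_gt0.
set m := Epi pi f; have m_gt0 : 0 < m := Epi_gt0 pi_gt0 pi_sum1 f_gt0.
have b_gt0 : 0 < (2 * m)^-1 by rewrite invr_gt0; lra.
pose g w := 1/2 + (2 * m)^-1 * f w.
have g_gt : forall w, 1/2 < g w by move=> w; rewrite /g; have := f_gt0 w; nra.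
have g_gt0 : forall w, 0 < g w by move=> w; have := g_gt w; lra.
have Eg : Epi pi g = 1.
  by rewrite /g Epi_affine // -/m; field; rewrite gt_eqF.
have Ent_g : Ent pi g <= K * ((2 * m)^-1 * Dir Q pi f).
  apply: le_trans (mlsi g g_gt0 (fun w => ltW (g_gt w)) Eg) _.
  by apply: ler_wpM2l; [lra | apply: Dir_affine_le => //; lra].
have Ent_f : Ent pi f <= m * (12 * Ent pi g).
  rewrite Ent_psi // Ent_psi // Eg mul1r -/m; apply: ler_wpM2l; first lra.
  rewrite /Epi mulr_sumr; apply: ler_sum => w _.
  rewrite mulrCA divr1; apply: ler_wpM2l; first exact: ltW.
  have -> : f w / m = 2 * g w - 1 by rewrite /g; field; rewrite gt_eqF.
  exact: psi_le_mid.
apply: le_trans Ent_f _.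
have -> : 6 * K * Dir Q pi f = m * (12 * (K * ((2 * m)^-1 * Dir Q pi f))).
  by field; rewrite gt_eqF.
rewrite ler_pM2l // ler_pM2l //; lra.
Qed.
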